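(* Let $$ \eta_u A^{(u)} = \left[\begin{array}{cccccc} \tau_1^2+\tau_s^2+\tau_c^2 & 2\tau_1\tau_s & 2\tau_1\tau_c & 2\tau_c\tau_s & 0 & 0\\ 2\tau_1\tau_s & \tau_1^2+\tau_s^2+\tau_c^2 & 2\tau_c\tau_s & 2\tau_1\tau_c & 0 & 0\\ 2\tau_1\tau_c & 2\tau_c\tau_s & \tau_1^2+\tau_s^2+\tau_c^2 & 2\tau_1\tau_s & 0 & 0\\ 2\tau_c\tau_s & 2\tau_1\tau_c & 2\tau_1\tau_s & \tau_1^2+\tau_s^2+\tau_c^2 & 0 & 0\\ 0 & 0 & 0 & 0 & 2\tau_1^2 & 2\tau_1^2\\ 0 & 0 & 0 & 0 & 2\tau_1^2 & 2\tau_1^2 \end{array}\right],$$ $$ A = \eta_u A^{(u)} + \left[\begin{array}{cccccc} (\tau_1+\tau_s)^2 & (\tau_1+\tau_s)^2 & \tau_c(\tau_1+\tau_s) & \tau_c(\tau_1+\tau_s) & 0 & 0\\ (\tau_1+\tau_s)^2 & (\tau_1+\tau_s)^2 & \tau_c(\tau_1+\tau_s) & \tau_c(\tau_1+\tau_s) & 0 & 0\\ \tau_c(\tau_1+\tau_s) & \tau_c(\tau_1+\tau_s) & \tau_c^2 & \tau_c^2 & 0 & 0\\ \tau_c(\tau_1+\tau_s) & \tau_c(\tau_1+\tau_s) & \tau_c^2 & \tau_c^2 & 0 & 0\\ 0 & 0 & 0 & 0 & 0 & 0\\ 0 & 0 & 0 & 0 & 0 & 0 \end{array}\right],$$ and assume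 $1 \gg \frac{\tau_c}{\tau_1} > \frac{\tau_s}{\tau_1} > 0$, $\frac{4}{9}\tau_c \le \tau_s \le \tau_c$ and $\tau_1+\tau_c+\tau_s = 1$. Let $D$ be the diagonal matrix with $D_{xx} = \sum_{x'} A_{xx'}$, and let $\lambda_1,\lambda_2,\lambda_3$ and $v_1,v_2,v_3$ be the largest three eigenvalues and corresponding eigenvectors of the normalized adjacency matrix $D^{-1/2} A D^{-1/2}$. Define $$\hat\lambda_1 = 1,\quad \hat\lambda_2 = 1,\quad \hat\lambda_3 = 1 - \frac{16}{3}\frac{\tau_c}{\tau_1},$$ $$\hat v_1 = [0,0,0,0,1,1],\quad \hat v_2 = [\sqrt{3},\sqrt{3},1,1,0,0],\quad \hat v_3 = [1,1,-\sqrt{3},-\sqrt{3},0,0].$$ Let $U = [v_1,v_2,v_3]$ and $\hat U = [\hat v_1,\hat v_2,\hat v_3]$. Then for $i\in\{1,2,3\}$, $|\lambda_i - \hat\lambda_i| \le O\big((\tfrac{\tau_c}{\tau_1})^2\big)$ and $\|\sin(U,\hat U)\|_F \le O\big(\tfrac{\tau_c}{\tau_1}\big)$, where $\sin(U,\hat U)$ denotes the matrix of sines of the principal angles between the column subspaces of $U$ and $\hat U$ (subspace distance between matrices with orthonormal columns).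
   Context: Toy example: six data points (nodes) — a red cube and a blue cube (known class, labeled), a red sphere and a blue sphere (novel class), and two gray cylinders (novel class). The augmentation probability $\mathcal{T}(x\mid\bar x)$ equals $\tau_1$ if $x$ and $\bar x$ share both color and shape, $\tau_c$ if they share color but not shape, $\tau_s$ if they share shape but not color, and $\tau_0 = 0$ otherwise. The unlabeled adjacency is $A^{(u)}_{xx'} = \mathbb{E}_{\bar x}\mathcal{T}(x\mid\bar x)\mathcal{T}(x'\mid\bar x)$ (with $\eta_u = 6$), and the label perturbation is $\eta_l \mathfrak{l}\mathfrak{l}^{\top}$ with $\eta_l = 4$ and $\mathfrak{l}_x = \mathbb{E}_{\bar x_l}\mathcal{T}(x\mid\bar x_l)$ averaged over the two labeled cubes, giving the second matrix above. *)

From HB Require Import structures.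
From mathcomp Require Import all_boot all_order all_algebra.
From mathcomp Require Import reals.
Set Implicit Arguments. Unset Strict Implicit. Unset Printing Implicit Defensive.
Import Order.TTheory GRing.Theory Num.Theory.
Local Open Scope ring_scope.

Section Toy.
Variable R : realType.


Definition mx_of_rows (rows : seq (seq R)) : 'M[R]_6 :=
  \matrix_(i < 6, j < 6) nth 0 (nth [::] rows i) j.

Definition etaAu (t1 tc ts : R) : 'M[R]_6 :=
  let a := t1 ^+ 2 + ts ^+ 2 + tc ^+ 2 in
  let p := 2 * t1 * ts in
  let q := 2 * t1 * tc in
  let s := 2 * tc * ts in
  let f := 2 * t1 ^+ 2 in
  mx_of_rows
  [:: [:: a; p; q; s; 0; 0];
      [:: p; a; s; q; 0; 0];
      [:: q; s; a; p; 0; 0];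
      [:: s; q; p; a; 0; 0];
      [:: 0; 0; 0; 0; f; f];
      [:: 0; 0; 0; 0; f; f]].

Definition labelPert (t1 tc ts : R) : 'M[R]_6 :=
  let b := (t1 + ts) ^+ 2 in
  let c := tc * (t1 + ts) in
  let e := tc ^+ 2 in
  mx_of_rows
  [:: [:: b; b; c; c; 0; 0];
      [:: b; b; c; c; 0; 0];
      [:: c; c; e; e; 0; 0];
      [:: c; c; e; e; 0; 0];
      [:: 0; 0; 0; 0; 0; 0];
      [:: 0; 0; 0; 0; 0; 0]].

Definition Amat (t1 tc ts : R) : 'M[R]_6 := etaAu t1 tc ts + labelPert t1 tc ts.

Definition degree (t1 tc ts : R) (x : 'I_6) : R := \sum_(x' < 6) Amat t1 tc ts x x'.

Definition Dinvsqrt (t1 tc ts : R) : 'M[R]_6 :=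
  diag_mx (\row_(x < 6) (Num.sqrt (degree t1 tc ts x))^-1).

Definition normAdj (t1 tc ts : R) : 'M[R]_6 :=
  Dinvsqrt t1 tc ts *m Amat t1 tc ts *m Dinvsqrt t1 tc ts.

(* hat lambda_1, hat lambda_2, hat lambda_3 (indexed 0,1,2) *)
Definition lamhat (t1 tc ts : R) (k : 'I_3) : R :=
  if val k == 2%N then 1 - (16%:R / 3%:R) * (tc / t1) else 1.

(* hat v_1, hat v_2, hat v_3 as columns of hat U *)
Definition Uhat : 'M[R]_(6, 3) :=
  \matrix_(i < 6, k < 3)
   nth 0 (nth [::] [:: [:: 0; 0; 0; 0; 1; 1];
                       [:: Num.sqrt 3%:R; Num.sqrt 3%:R; 1; 1; 0; 0];
                       [:: 1; 1; - Num.sqrt 3%:R; - Num.sqrt 3%:R; 0; 0]] k) i.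

Definition frob m n (M : 'M[R]_(m, n)) : R :=
  Num.sqrt (\sum_(i < m) \sum_(j < n) M i j ^+ 2).

Definition colnormalize m n (M : 'M[R]_(m, n)) : 'M[R]_(m, n) :=
  \matrix_(i < m, j < n) (M i j / Num.sqrt (\sum_(l < m) M l j ^+ 2)).

(* ||sin(U, W)||_F for U, W with orthonormal columns of the same number k:
   the Frobenius norm of (I - U U^T) W. *)
Definition sinF m k (U W : 'M[R]_(m, k)) : R :=
  frob ((1%:M - U *m U^T) *m W).

Definition first3 (V : 'M[R]_6) : 'M[R]_(6, 3) :=
  \matrix_(i < 6, k < 3) V i (widen_ord (isT : (3 <= 6)%N) k).

End Toy.

From HB Require Import structures.
From mathcomp Require Import all_boot all_order all_algebra.
From mathcomp Require Import reals.
From mathcomp Require Import ring lra.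

Set Implicit Arguments.
Unset Strict Implicit.
Unset Printing Implicit Defensive.

Import Order.TTheory GRing.Theory Num.Theory.
Local Open Scope ring_scope.

(* The hat vectors are perturbations of exact eigenvectors.  With D the degree matrix
   (degrees d0 = 3 - 2 tc on the cubes, d2 = 1 + 2 tc on the spheres, 4 t1^2 on the cylinders),
   the generalized eigenproblem A g = lambda D g is solved by g1 = e5 + e6 and g2 = (1,1,1,1,0,0)
   with lambda = 1, and by g3 = (d2,d2,-d0,-d0,0,0) with lambda = lam3 = 1 - 16 tc (1 - tc) / (d0 d2),
   so the D^(1/2) g_i are eigenvectors of D^(-1/2) A D^(-1/2).  Vectors D-orthogonal to the g_i are
   antisymmetric on each of the three pairs of nodes, and there the Rayleigh quotient is a 2x2 form
   bounded by lam3 - tc/9.  This gap forces the top three eigenvalues of any orthonormal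
   eigendecomposition to be exactly 1, 1, lam3, with top eigenvectors spanning the D^(1/2) g_i.
   Finally lam3 = 1 - 16/3 tc/t1 + O((tc/t1)^2), and the normalized D^(1/2) g_i lie within 2 tc of the
   normalized hat vectors in Frobenius norm, which bounds the sine distance. *)

Lemma col_gram (R : pzSemiRingType) m n p (X : 'M[R]_(m, n)) (Y : 'M[R]_(m, p)) i j :
  ((col i X)^T *m col j Y) 0 0 = (X^T *m Y) i j.
Proof. by rewrite !mxE; apply: eq_bigr => l _; rewrite !mxE. Qed.

Lemma card_ord_lt n p : (p <= n)%N -> #|[pred j : 'I_n | (j < p)%N]| = p.
Proof.
move=> le_pn; rewrite -sum1_card.
rewrite (eq_bigl (fun j : 'I_n => (j < p)%N)) // (big_ord_narrow le_pn).
by rewrite sum1_card card_ord.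
Qed.

Lemma antitone_threshold (R : realDomainType) n k (mu : 'I_n -> R) (m : R) :
  (forall i j : 'I_n, (i <= j)%N -> mu j <= mu i) ->
  #|[pred j | m < mu j]| = k -> forall j, (m < mu j) = (j < k)%N.
Proof.
move=> mu_anti card_k j; apply/idP/idP => [mu_j|lt_jk].
- rewrite -card_k -[j.+1](@card_ord_lt n) //.
  apply: subset_leq_card; apply/subsetP => i; rewrite !inE ltnS => le_ij.
  exact: lt_le_trans mu_j (mu_anti _ _ le_ij).
- rewrite ltNge; apply/negP => mu_j.
  suff : (k <= j)%N by rewrite leqNgt lt_jk.
  rewrite -card_k -[X in (_ <= X)%N](@card_ord_lt n j (ltnW (ltn_ord j))).
  apply: subset_leq_card; apply/subsetP => i; rewrite !inE => m_i.
  rewrite ltnNge; apply/negP => le_ji.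
  by move: (le_lt_trans (mu_anti _ _ le_ji) (le_lt_trans mu_j m_i)); rewrite ltxx.
Qed.

(* With A = V^T W, a nonzero entry A j i forces mu j = nu i; the row norms of A are 1 above the
   gap m (apply the Rayleigh bound to the columns of V - W A^T) and 0 below it, while its column
   norms are 1.  Counting squares, exactly k eigenvalues exceed m. *)
Section TopEigenspace.

Variables (R : realFieldType) (n k : nat).
Variables (N V : 'M[R]_n) (mu : 'I_n -> R) (W : 'M[R]_(n, k)) (nu : 'I_k -> R) (m : R).

Hypothesis V_orth : V^T *m V = 1%:M.
Hypothesis N_diag : N = V *m diag_mx (\row_j mu j) *m V^T.
Hypothesis mu_antitone : forall i j : 'I_n, (i <= j)%N -> mu j <= mu i.
Hypothesis W_orth : W^T *m W = 1%:M.
Hypothesis N_W : N *m W = W *m diag_mx (\row_i nu i).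
Hypothesis rayleigh_gap :
  forall x : 'cV[R]_n, W^T *m x = 0 -> (x^T *m N *m x) 0 0 <= m * (x^T *m x) 0 0.
Hypothesis nu_gap : forall i, m < nu i.

Let A := V^T *m W.
Let rowsq j := \sum_i A j i ^+ 2.

Let VVt : V *m V^T = 1%:M. Proof. exact: mulmx1C. Qed.

Let Vt_N : V^T *m N = diag_mx (\row_j mu j) *m V^T.
Proof. by rewrite N_diag !mulmxA V_orth mul1mx. Qed.

Let D_A : diag_mx (\row_j mu j) *m A = A *m diag_mx (\row_i nu i).
Proof. by rewrite /A mulmxA -Vt_N -mulmxA N_W mulmxA. Qed.

Let coord_eigen j i : mu j * A j i = A j i * nu i.
Proof. by move/matrixP/(_ j i): D_A; rewrite mul_diag_mx mul_mx_diag !mxE. Qed.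

Let coord_colsq i : \sum_j A j i ^+ 2 = 1.
Proof.
have AtA : A^T *m A = 1%:M by rewrite /A trmx_mul trmxK mulmxA -(mulmxA W^T) VVt mulmx1.
have -> : \sum_j A j i ^+ 2 = (A^T *m A) i i.
  by rewrite mxE; apply: eq_bigr => j _; rewrite [A^T _ _]mxE expr2.
by rewrite AtA mxE eqxx.
Qed.

Let coord_eq0 j i : mu j <= m -> A j i = 0.
Proof.
move=> mu_j; apply/eqP; have := coord_eigen j i.
rewrite mulrC => /eqP; rewrite -subr_eq0 -mulrBr mulf_eq0 subr_eq0 => /orP[] // /eqP nu_mu.
by have := nu_gap i; rewrite -nu_mu ltNge mu_j.
Qed.

Let Res := V - W *m A^T.

Let W_Res : W^T *m Res = 0.
Proof. by rewrite mulmxBr /A trmx_mul trmxK mulmxA W_orth mul1mx subrr. Qed.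

Let N_Res : N *m Res = Res *m diag_mx (\row_j mu j).
Proof.
have N_V : N *m V = V *m diag_mx (\row_j mu j).
  by rewrite N_diag -!mulmxA V_orth mulmx1.
have nu_At : diag_mx (\row_i nu i) *m A^T = A^T *m diag_mx (\row_j mu j).
  by rewrite -[diag_mx (\row_i nu i)]tr_diag_mx -trmx_mul -D_A trmx_mul tr_diag_mx.
by rewrite mulmxBr mulmxBl N_V mulmxA N_W -!mulmxA nu_At.
Qed.

Let Res_gram j : (Res^T *m Res) j j = 1 - rowsq j.
Proof.
have Rt_W : Res^T *m W = 0 by apply: trmx_inj; rewrite trmx_mul trmxK W_Res trmx0.
have At : A^T = W^T *m V by rewrite trmx_mul trmxK.
have -> : Res^T *m Res = 1%:M - A *m A^T.
  rewrite {2}/Res mulmxBr mulmxA Rt_W mul0mx subr0.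
  by rewrite /Res linearB /= mulmxBl V_orth trmx_mul trmxK -mulmxA -At.
rewrite !mxE eqxx /=; congr (_ - _); apply: eq_bigr => i _.
by rewrite [A^T _ _]mxE expr2.
Qed.

Let rowsq_le1 j : rowsq j <= 1.
Proof.
rewrite -subr_ge0 -Res_gram mxE; apply: sumr_ge0 => i _.
by rewrite mxE -expr2 sqr_ge0.
Qed.

Let rowsq_top j : m < mu j -> rowsq j = 1.
Proof.
move=> m_mu; set x := col j Res.
have W_x : W^T *m x = 0 by rewrite /x colE mulmxA W_Res mul0mx.
have N_x : N *m x = mu j *: x.
  rewrite /x colE mulmxA N_Res mul_mx_diag -!colE.
  by apply/matrixP => i l; rewrite !mxE mulrC.
have := @rayleigh_gap x W_x; rewrite -mulmxA N_x -scalemxAr mxE /x col_gram Res_gram.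
move=> gap; apply/eqP; rewrite eq_le rowsq_le1 /= -subr_le0.
have := rowsq_le1 j; nra.
Qed.

Let rowsqE j : rowsq j = if m < mu j then 1 else 0.
Proof.
case: ifPn => [|]; first exact: rowsq_top.
rewrite -leNgt => mu_j; apply: big1 => i _; rewrite coord_eq0 //.
by rewrite expr0n.
Qed.

Let card_top : #|[pred j | m < mu j]| = k.
Proof.
have : \sum_j rowsq j = k%:R.
  rewrite /rowsq exchange_big /= (eq_bigr (fun=> 1)) => [|i _]; last exact: coord_colsq.
  by rewrite sumr_const card_ord.
rewrite (eq_bigr _ (fun j _ => rowsqE j)) -big_mkcond /= sumr_const => /eqP.
by rewrite eqr_nat => /eqP.
Qed.

Let top_gap j : (m < mu j) = (j < k)%N.
Proof. exact: antitone_threshold mu_antitone card_top j. Qed.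

Lemma top_coord_eq0 (j : 'I_n) (i : 'I_k) : (k <= j)%N -> (V^T *m W) j i = 0.
Proof. by rewrite leqNgt -top_gap -leNgt; apply: coord_eq0. Qed.

Lemma top_eigenvalue (j : 'I_n) : (j < k)%N -> exists i, mu j = nu i.
Proof.
rewrite -top_gap => /rowsq_top rowsq1.
have [i Aji] : exists i, A j i != 0.
  apply/existsP; apply: contraT; rewrite negb_exists => /forallP A0.
  have : rowsq j = 0 by apply: big1 => i _; rewrite (eqP (negPn (A0 i))) expr0n.
  by rewrite rowsq1 => /eqP; rewrite oner_eq0.
by exists i; apply: (mulIf Aji); rewrite coord_eigen mulrC.
Qed.

Lemma sum_top_eigenvalues : \sum_(j : 'I_n | (j < k)%N) mu j = \sum_i nu i.
Proof.
transitivity (\sum_j mu j * rowsq j).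
  rewrite [RHS](bigID (fun j : 'I_n => (j < k)%N)) /= [X in _ + X]big1 ?addr0.
    by apply: eq_bigr => j jk; rewrite rowsqE top_gap jk mulr1.
  by move=> j /negbTE jk; rewrite rowsqE top_gap jk mulr0.
transitivity (\sum_i nu i * \sum_j A j i ^+ 2); last first.
  by apply: eq_bigr => i _; rewrite coord_colsq mulr1.
rewrite /rowsq; under eq_bigr do rewrite mulr_sumr.
rewrite exchange_big /=; apply: eq_bigr => i _; rewrite mulr_sumr.
by apply: eq_bigr => j _; rewrite expr2 mulrA coord_eigen mulrAC mulrC.
Qed.

End TopEigenspace.

Lemma diag_mx_mul (R : comPzSemiRingType) n (a b : 'I_n -> R) :
  diag_mx (\row_i a i) *m diag_mx (\row_i b i) = diag_mx (\row_i (a i * b i)).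
Proof. by rewrite mulmx_diag; congr diag_mx; apply/rowP => i; rewrite !mxE. Qed.

Lemma diag_mx_eq1 (R : pzSemiRingType) n (a : 'I_n -> R) :
  (forall i, a i = 1) -> diag_mx (\row_i a i) = 1%:M.
Proof. by move=> a1; rewrite -diag_const_mx; congr diag_mx; apply/rowP => i; rewrite !mxE a1. Qed.

Section NormalizedAdjacency.

Variables (R : realType) (n k : nat) (A : 'M[R]_n) (d : 'I_n -> R).
Variables (G : 'M[R]_(n, k)) (nu kappa : 'I_k -> R).

Hypothesis d_gt0 : forall i, 0 < d i.
Hypothesis kappa_gt0 : forall i, 0 < kappa i.
Hypothesis A_G : A *m G = diag_mx (\row_i d i) *m G *m diag_mx (\row_i nu i).
Hypothesis G_gram : G^T *m diag_mx (\row_i d i) *m G = diag_mx (\row_i kappa i).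

Definition normalized_eigvecs : 'M[R]_(n, k) :=
  diag_mx (\row_i Num.sqrt (d i)) *m G *m diag_mx (\row_i (Num.sqrt (kappa i))^-1).

Let D := diag_mx (\row_i d i).
Let S := diag_mx (\row_i Num.sqrt (d i)).
Let Si := diag_mx (\row_i (Num.sqrt (d i))^-1).
Let Ci := diag_mx (\row_i (Num.sqrt (kappa i))^-1).
Let N := Si *m A *m Si.

Let sqrt_d_neq0 i : Num.sqrt (d i) != 0. Proof. by rewrite sqrtr_eq0 -ltNge. Qed.

Let Si_S : Si *m S = 1%:M.
Proof. by rewrite diag_mx_mul; apply: diag_mx_eq1 => i; rewrite mulVf ?sqrt_d_neq0. Qed.

Let S_Si : S *m Si = 1%:M.
Proof. by rewrite diag_mx_mul; apply: diag_mx_eq1 => i; rewrite mulfV ?sqrt_d_neq0. Qed.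

Let S_S : S *m S = D.
Proof.
by rewrite diag_mx_mul; congr diag_mx; apply/rowP => i; rewrite !mxE -expr2 sqr_sqrtr ?ltW.
Qed.

Let Si_D : Si *m D = S.
Proof. by rewrite -S_S mulmxA Si_S mul1mx. Qed.

Lemma normalized_eigvecs_orth : normalized_eigvecs^T *m normalized_eigvecs = 1%:M.
Proof.
rewrite /normalized_eigvecs !trmx_mul !tr_diag_mx -/S -/Ci !mulmxA.
rewrite -(mulmxA _ S S) S_S -(mulmxA _ G^T) -(mulmxA _ (G^T *m D)) G_gram.
rewrite !diag_mx_mul; apply: diag_mx_eq1 => i.
have sqrt_k_neq0 : Num.sqrt (kappa i) != 0 by rewrite sqrtr_eq0 -ltNge.
have := sqr_sqrtr (ltW (kappa_gt0 i)); set s := Num.sqrt _ => s2.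
by rewrite -s2; field.
Qed.

Lemma normalized_eigvecs_eigen :
  N *m normalized_eigvecs = normalized_eigvecs *m diag_mx (\row_i nu i).
Proof.
rewrite /N /normalized_eigvecs -/S -/Ci !mulmxA -(mulmxA _ Si S) Si_S mulmx1.
by rewrite -(mulmxA _ A G) A_G !mulmxA Si_D -!mulmxA diag_mxC.
Qed.

Lemma normalized_rayleigh (m : R) :
  (forall z : 'cV[R]_n, G^T *m D *m z = 0 -> (z^T *m A *m z) 0 0 <= m * (z^T *m D *m z) 0 0) ->
  forall x : 'cV[R]_n, normalized_eigvecs^T *m x = 0 ->
  (x^T *m N *m x) 0 0 <= m * (x^T *m x) 0 0.
Proof.
move=> gap x Wx; set z := Si *m x.
have x_Sz : x = S *m z by rewrite /z mulmxA S_Si mul1mx.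
clearbody z; subst x.
have Gz : G^T *m D *m z = 0.
  have Ci_inv : diag_mx (\row_i Num.sqrt (kappa i)) *m Ci = 1%:M.
    rewrite diag_mx_mul; apply: diag_mx_eq1 => i; rewrite mulfV //.
    by rewrite sqrtr_eq0 -ltNge.
  move: Wx; rewrite /normalized_eigvecs !trmx_mul !tr_diag_mx -/S -/Ci.
  move/(congr1 (mulmx (diag_mx (\row_i Num.sqrt (kappa i))))).
  by rewrite mulmx0 !mulmxA Ci_inv mul1mx -(mulmxA _ S S) S_S.
have := gap z Gz; congr (_ <= _ * _); congr (fun_of_matrix _ 0 0).
  by rewrite /N trmx_mul tr_diag_mx !mulmxA -(mulmxA _ S Si) S_Si mulmx1 -(mulmxA _ Si S) Si_S mulmx1.
by rewrite trmx_mul tr_diag_mx mulmxA -(mulmxA _ S S) S_S.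
Qed.

End NormalizedAdjacency.

Section SubspaceSine.

Variable R : realType.

Let sumsq_tr m n (M : 'M[R]_(m, n)) : \sum_i \sum_j M i j ^+ 2 = \tr (M *m M^T).
Proof.
by apply: eq_bigr => i _; rewrite mxE; apply: eq_bigr => j _; rewrite mxE expr2.
Qed.

Lemma frob_proj_le m k n (U : 'M[R]_(m, k)) (Z : 'M[R]_(m, n)) :
  U^T *m U = 1%:M -> frob ((1%:M - U *m U^T) *m Z) <= frob Z.
Proof.
move=> U_orth; apply: ler_wsqrtr; rewrite !sumsq_tr.
set P := 1%:M - U *m U^T.
have P_sym : P^T = P by rewrite /P linearB /= trmx1 trmx_mul trmxK.
have P_idem : P *m P = P.
  by rewrite /P mulmxBl mul1mx mulmxBr mulmx1 !mulmxA -(mulmxA U) U_orth mulmx1 subrr subr0.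
rewrite trmx_mul P_sym mulmxA -mulmxA mxtrace_mulC mulmxA -(mulmxA Z^T) P_idem.
rewrite /P mulmxBr mulmx1 mulmxBl linearB /= (mxtrace_mulC Z^T) lerBlDr lerDl.
have -> : Z^T *m (U *m U^T) *m Z = (U^T *m Z)^T *m (U^T *m Z) by rewrite trmx_mul trmxK !mulmxA.
rewrite mxtrace_mulC -sumsq_tr; apply: sumr_ge0 => i _; apply: sumr_ge0 => j _.
exact: sqr_ge0.
Qed.

Lemma sinF_le_frob_sub m k (U W W' : 'M[R]_(m, k)) :
  U^T *m U = 1%:M -> (1%:M - U *m U^T) *m W = 0 -> sinF U W' <= frob (W' - W).
Proof.
move=> U_orth PW; rewrite /sinF.
have -> : (1%:M - U *m U^T) *m W' = (1%:M - U *m U^T) *m (W' - W).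
  by rewrite mulmxBr PW subr0.
exact: frob_proj_le.
Qed.

Lemma lcols_orth n k (hk : (k <= n)%N) (V : 'M[R]_n) :
  V^T *m V = 1%:M ->
  let U := \matrix_(i < n, l < k) V i (widen_ord hk l) in U^T *m U = 1%:M.
Proof.
move=> V_orth U; apply/matrixP => l l'.
have := congr1 (fun M : 'M[R]_n => M (widen_ord hk l) (widen_ord hk l')) V_orth.
have widen_inj : injective (widen_ord hk) by move=> a b /(congr1 val) ab; apply: val_inj.
rewrite /= !mxE (inj_eq widen_inj) => <-.
by apply: eq_bigr => i _; rewrite !mxE.
Qed.

Lemma lcols_proj n k p (hk : (k <= n)%N) (V : 'M[R]_n) (W : 'M[R]_(n, p)) :
  V^T *m V = 1%:M -> (forall (j : 'I_n) (c : 'I_p), (k <= j)%N -> (V^T *m W) j c = 0) ->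
  let U := \matrix_(i < n, l < k) V i (widen_ord hk l) in (1%:M - U *m U^T) *m W = 0.
Proof.
move=> V_orth VW_low U; apply/eqP; rewrite mulmxBl mul1mx subr_eq0; apply/eqP.
rewrite -{1}[W]mul1mx -(mulmx1C V_orth) -mulmxA -mulmxA.
apply/matrixP => i c; rewrite !mxE.
rewrite (bigID (fun j : 'I_n => (j < k)%N)) /= [X in _ + X]big1 ?addr0; last first.
  by move=> j; rewrite -leqNgt => /VW_low ->; rewrite mulr0.
rewrite big_ord_narrow; apply: eq_bigr => l _; rewrite !mxE; congr (_ * _).
by apply: eq_bigr => r _; rewrite !mxE.
Qed.

End SubspaceSine.

Lemma psd2_cross (R : realFieldType) (p q b y w : R) :
  0 < p -> b ^+ 2 <= p * q -> 2 * b * y * w <= p * y ^+ 2 + q * w ^+ 2.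
Proof.
move=> p_gt0 bpq; rewrite -subr_ge0 -(pmulr_rge0 _ p_gt0).
have -> : p * (p * y ^+ 2 + q * w ^+ 2 - 2 * b * y * w) =
          (p * y - b * w) ^+ 2 + (p * q - b ^+ 2) * w ^+ 2 by ring.
by rewrite addr_ge0 ?sqr_ge0 // mulr_ge0 ?sqr_ge0 // subr_ge0.
Qed.

Lemma sqrtr_sub_sqr_le (R : rcfType) (a b : R) : 1 <= a -> 0 <= b ->
  (Num.sqrt a - Num.sqrt b) ^+ 2 <= (a - b) ^+ 2.
Proof.
move=> a_ge1 b_ge0.
have sa_ge1 : 1 <= Num.sqrt a by rewrite -sqrtr1 ler_wsqrtr.
have sb_ge0 : 0 <= Num.sqrt b := sqrtr_ge0 b.
have -> : a - b = (Num.sqrt a - Num.sqrt b) * (Num.sqrt a + Num.sqrt b).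
  by rewrite -subr_sqr !sqr_sqrtr // (le_trans ler01).
rewrite exprMn ler_peMr ?sqr_ge0 // -(expr1n _ 2) ler_sqr ?nnegrE; lra.
Qed.

Lemma quad_formE (R : comPzSemiRingType) n (M : 'M[R]_n) (x : 'cV[R]_n) :
  (x^T *m M *m x) 0 0 = \sum_j \sum_i x i 0 * M i j * x j 0.
Proof.
rewrite mxE; apply: eq_bigr => j _; rewrite mxE mulr_suml.
by apply: eq_bigr => i _; rewrite mxE.
Qed.

Lemma quad_form_diag (R : comPzSemiRingType) n (d : 'I_n -> R) (x : 'cV[R]_n) :
  (x^T *m diag_mx (\row_i d i) *m x) 0 0 = \sum_i d i * x i 0 ^+ 2.
Proof.
rewrite mul_mx_diag mxE; apply: eq_bigr => i _.
by rewrite !mxE [x i 0 * _]mulrC -mulrA -expr2.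
Qed.

Notation o0 := (@Ordinal 6 0 isT).
Notation o1 := (@Ordinal 6 1 isT).
Notation o2 := (@Ordinal 6 2 isT).
Notation o3 := (@Ordinal 6 3 isT).
Notation o4 := (@Ordinal 6 4 isT).
Notation o5 := (@Ordinal 6 5 isT).
Notation k0 := (@Ordinal 3 0 isT).
Notation k1 := (@Ordinal 3 1 isT).
Notation k2 := (@Ordinal 3 2 isT).

Lemma sum_ord6 (V : nmodType) (F : 'I_6 -> V) :
  \sum_(i < 6) F i = F o0 + F o1 + F o2 + F o3 + F o4 + F o5.
Proof.
rewrite !big_ord_recr big_ord0 /= add0r.
by congr (_ + _ + _ + _ + _ + _); congr F; apply: val_inj.
Qed.

Lemma sum_ord3 (V : nmodType) (F : 'I_3 -> V) : \sum_(i < 3) F i = F k0 + F k1 + F k2.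
Proof.
rewrite !big_ord_recr big_ord0 /= add0r.
by congr (_ + _ + _); congr F; apply: val_inj.
Qed.

Lemma ord6_ind (P : 'I_6 -> Prop) :
  P o0 -> P o1 -> P o2 -> P o3 -> P o4 -> P o5 -> forall i, P i.
Proof.
by move=> ? ? ? ? ? ? [[|[|[|[|[|[|i]]]]]] Hi] //; rewrite (bool_irrelevance Hi isT).
Qed.

Lemma ord3_ind (P : 'I_3 -> Prop) : P k0 -> P k1 -> P k2 -> forall i, P i.
Proof. by move=> ? ? ? [[|[|[|i]]] Hi] //; rewrite (bool_irrelevance Hi isT). Qed.

Lemma mx_of_rowsE (R : realType) (rows : seq (seq R)) i j :
  mx_of_rows rows i j = nth 0 (nth [::] rows i) j.
Proof. exact: mxE. Qed.

Lemma colnormalize_UhatE (R : realType) (i : 'I_6) (j : 'I_3) :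
  colnormalize (Uhat R) i j = Uhat R i j / Num.sqrt (if val j == 0%N then 2 else 8).
Proof.
have r3 : Num.sqrt 3%:R ^+ 2 = 3%:R :> R by rewrite sqr_sqrtr // ler0n.
rewrite mxE; congr (_ / Num.sqrt _); rewrite sum_ord6.
by move: j; apply: ord3_ind; rewrite /Uhat !mxE /= ?sqrrN ?r3; ring.
Qed.

Section ToyModel.

Variables (R : realType) (t1 tc ts : R).

Hypothesis tau_sum : t1 + tc + ts = 1.
Hypothesis tc_ge0 : 0 <= tc.
Hypothesis tc_lt1 : tc < 1.

Let t1E : t1 = 1 - tc - ts. Proof. by rewrite -tau_sum; ring. Qed.

Let AmatE i j : Amat t1 tc ts i j = etaAu t1 tc ts i j + labelPert t1 tc ts i j.
Proof. exact: mxE. Qed.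

Definition toy_degree (i : 'I_6) : R :=
  if (i < 2)%N then 3 - 2 * tc else if (i < 4)%N then 1 + 2 * tc else 4 * t1 ^+ 2.

Lemma degreeE : degree t1 tc ts =1 toy_degree.
Proof.
move=> i; rewrite /degree.
under eq_bigr do rewrite AmatE /etaAu /labelPert !mx_of_rowsE.
by rewrite sum_ord6; move: i; apply: ord6_ind; rewrite /toy_degree /= t1E; ring.
Qed.

Definition toy_eigvecs : 'M[R]_(6, 3) :=
  \matrix_(i < 6, k < 3) nth 0 (nth [::]
    [:: [:: 0; 1; 1 + 2 * tc]; [:: 0; 1; 1 + 2 * tc];
        [:: 0; 1; - (3 - 2 * tc)]; [:: 0; 1; - (3 - 2 * tc)];
        [:: 1; 0; 0]; [:: 1; 0; 0]] i) k.

Definition lam3 : R := 1 - 16 * tc * (1 - tc) / ((3 - 2 * tc) * (1 + 2 * tc)).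

Definition toy_nu (k : 'I_3) : R := if val k == 2%N then lam3 else 1.

Definition toy_kappa (k : 'I_3) : R :=
  if val k == 0%N then 2 * (4 * t1 ^+ 2)
  else if val k == 1%N then 8 else 8 * ((3 - 2 * tc) * (1 + 2 * tc)).

Let d0_neq0 : 3 - 2 * tc != 0. Proof. by apply/eqP => d0; have := tc_lt1; lra. Qed.
Let d2_neq0 : 1 + 2 * tc != 0. Proof. by apply/eqP => d2; have := tc_ge0; lra. Qed.

Lemma toy_gen_eigen :
  Amat t1 tc ts *m toy_eigvecs =
  diag_mx (\row_i degree t1 tc ts i) *m toy_eigvecs *m diag_mx (\row_k toy_nu k).
Proof.
apply/matrixP => i k; rewrite mul_mx_diag mul_diag_mx !mxE degreeE.
under eq_bigr do rewrite AmatE /etaAu /labelPert !mx_of_rowsE mxE.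
rewrite sum_ord6 /toy_degree /toy_nu /toy_eigvecs ?mxE t1E.
move: i; apply: ord6_ind; move: k; apply: ord3_ind => /=; try ring.
all: by rewrite /lam3; field; rewrite d0_neq0 d2_neq0.
Qed.

Lemma toy_gram :
  toy_eigvecs^T *m diag_mx (\row_i degree t1 tc ts i) *m toy_eigvecs =
  diag_mx (\row_k toy_kappa k).
Proof.
apply/matrixP => k l; rewrite mul_mx_diag !mxE.
under eq_bigr do rewrite !mxE degreeE.
rewrite sum_ord6 /toy_kappa /toy_degree.
by move: k; apply: ord3_ind; move: l; apply: ord3_ind => /=; ring.
Qed.

Hypothesis t1_gt0 : 0 < t1.

Lemma toy_orth_complement (z : 'cV[R]_6) :
  toy_eigvecs^T *m diag_mx (\row_i degree t1 tc ts i) *m z = 0 ->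
  [/\ z o1 0 = - z o0 0, z o3 0 = - z o2 0 & z o5 0 = - z o4 0].
Proof.
move=> orth.
have row k : \sum_i toy_eigvecs i k * toy_degree i * z i 0 = 0.
  move/matrixP/(_ k 0): orth; rewrite !mxE => orth_k; apply: etrans orth_k.
  by apply: eq_bigr => i _; rewrite mul_mx_diag !mxE degreeE.
have := row k0; have := row k1; have := row k2.
rewrite !sum_ord6 /toy_eigvecs !mxE /toy_degree /= => e2 e1 e0.
have cancel (c x : R) : c != 0 -> c * x = 0 -> x = 0.
  by move=> c0 /eqP; rewrite mulf_eq0 (negbTE c0) => /eqP.
have z45 : z o4 0 + z o5 0 = 0.
  apply: (@cancel (4 * t1 ^+ 2)); last by rewrite -[RHS]e0; ring.
  by rewrite gt_eqF // mulr_gt0 ?exprn_gt0.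
have z0123 : z o0 0 + z o1 0 - (z o2 0 + z o3 0) = 0.
  apply: (@cancel ((3 - 2 * tc) * (1 + 2 * tc))); last by rewrite -[RHS]e2; ring.
  by rewrite mulf_neq0.
have z3E : z o3 0 = z o0 0 + z o1 0 - z o2 0 by lra.
have z01 : 4 * (z o0 0 + z o1 0) = 0 by rewrite -[RHS]e1 z3E; ring.
split; lra.
Qed.

Lemma toy_rayleigh_gap (m : R) :
  let a := (t1 - ts) ^+ 2 + tc ^+ 2 in let b := 2 * tc * (t1 - ts) in
  0 < m * (3 - 2 * tc) - a ->
  b ^+ 2 <= (m * (3 - 2 * tc) - a) * (m * (1 + 2 * tc) - a) -> 0 <= m ->
  forall z : 'cV[R]_6, toy_eigvecs^T *m diag_mx (\row_i degree t1 tc ts i) *m z = 0 ->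
  (z^T *m Amat t1 tc ts *m z) 0 0 <= m * (z^T *m diag_mx (\row_i degree t1 tc ts i) *m z) 0 0.
Proof.
move=> a b P_gt0 PQ m_ge0 z /toy_orth_complement [z1 z3 z5].
rewrite quad_formE quad_form_diag.
under eq_bigr do under eq_bigr do rewrite AmatE /etaAu /labelPert !mx_of_rowsE.
rewrite !sum_ord6 !degreeE /toy_degree /= z1 z3 z5.
have := psd2_cross (z o0 0) (z o2 0) P_gt0 PQ.
have : 0 <= m * (4 * t1 ^+ 2 * z o4 0 ^+ 2).
  by rewrite mulr_ge0 // mulr_ge0 ?sqr_ge0 // mulr_ge0 ?sqr_ge0.
rewrite /a /b; nra.
Qed.

Lemma toy_eigvecs_Uhat_sumsq :
  \sum_i \sum_j
    (colnormalize (Uhat R) - normalized_eigvecs (degree t1 tc ts) toy_eigvecs toy_kappa) i j ^+ 2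
  = ((Num.sqrt 3%:R - Num.sqrt (3 - 2 * tc)) ^+ 2 + (1 - Num.sqrt (1 + 2 * tc)) ^+ 2) / 2.
Proof.
have d0_gt0 : 0 < 3 - 2 * tc by have := tc_lt1; lra.
have d2_gt0 : 0 < 1 + 2 * tc by have := tc_ge0; lra.
set s0 := Num.sqrt (3 - 2 * tc); set s2 := Num.sqrt (1 + 2 * tc).
set r2 := Num.sqrt (2 : R); set r3 := Num.sqrt (3%:R : R); set r8 := Num.sqrt (8 : R).
have s0_sq : s0 ^+ 2 = 3 - 2 * tc by rewrite sqr_sqrtr ?ltW.
have s2_sq : s2 ^+ 2 = 1 + 2 * tc by rewrite sqr_sqrtr ?ltW.
have r8_sq : r8 ^+ 2 = 8 by rewrite sqr_sqrtr.
have [s0_neq0 s2_neq0] : s0 != 0 /\ s2 != 0 by split; rewrite sqrtr_eq0 -ltNge.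
have [r2_neq0 r8_neq0] : r2 != 0 /\ r8 != 0 by split; rewrite sqrtr_eq0 -ltNge; lra.
have t1_neq0 : t1 != 0 by rewrite gt_eqF.
have sqrt_d4 : Num.sqrt (4 * t1 ^+ 2) = 2 * t1.
  rewrite (_ : 4 * t1 ^+ 2 = (2 * t1) ^+ 2); last by ring.
  by rewrite sqrtr_sqr ger0_norm // mulr_ge0 // ltW.
have kappa_sqrt j : Num.sqrt (toy_kappa j) =
    if val j == 0%N then r2 * (2 * t1) else if val j == 1%N then r8 else r8 * (s0 * s2).
  rewrite /toy_kappa; case: ifP => _; first by rewrite sqrtrM // sqrt_d4.
  by case: ifP => _ //; rewrite !sqrtrM //; lra.
set W := normalized_eigvecs _ _ _.
have diffE i j : (colnormalize (Uhat R) - W) i j =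
    Uhat R i j / Num.sqrt (if val j == 0%N then 2 else 8) -
    Num.sqrt (toy_degree i) * toy_eigvecs i j / Num.sqrt (toy_kappa j).
  rewrite mxE [(- W) i j]mxE colnormalize_UhatE.
  by rewrite /W /normalized_eigvecs mul_mx_diag mul_diag_mx !mxE degreeE.
under eq_bigr do under eq_bigr do rewrite diffE kappa_sqrt /Uhat /toy_eigvecs !mxE.
rewrite sum_ord6 !sum_ord3 /toy_degree /= sqrt_d4 -/s0 -/s2 -/r2 -/r8 -/r3.
transitivity (4 * ((r3 - s0) ^+ 2 + (1 - s2) ^+ 2) / r8 ^+ 2); last by rewrite r8_sq; field.
by rewrite -s0_sq -s2_sq; field; rewrite ?s0_neq0 ?s2_neq0 ?r2_neq0 ?r8_neq0 ?t1_neq0.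
Qed.

Lemma toy_eigvecs_near_Uhat :
  frob (colnormalize (Uhat R) -
        normalized_eigvecs (degree t1 tc ts) toy_eigvecs toy_kappa) <= 2 * tc.
Proof.
rewrite /frob toy_eigvecs_Uhat_sumsq.
apply: le_trans (ler_wsqrtr (_ : _ <= (2 * tc) ^+ 2)) _; last first.
  by rewrite sqrtr_sqr ger0_norm //; have := tc_ge0; lra.
have e0 : (Num.sqrt 3%:R - Num.sqrt (3 - 2 * tc)) ^+ 2 <= (2 * tc) ^+ 2.
  have := @sqrtr_sub_sqr_le _ 3%:R (3 - 2 * tc).
  by rewrite (_ : 3%:R - (3 - 2 * tc) = 2 * tc); [apply; have := tc_lt1; lra | ring].
have e2 : (1 - Num.sqrt (1 + 2 * tc)) ^+ 2 <= (2 * tc) ^+ 2.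
  have := @sqrtr_sub_sqr_le _ (1 + 2 * tc) 1; rewrite sqrtr1 -sqrrN opprB.
  by rewrite (_ : 1 + 2 * tc - 1 = 2 * tc); [apply; have := tc_ge0; lra | ring].
lra.
Qed.

End ToyModel.

Lemma lam3_lt1 (R : realType) (tc : R) : 0 < tc < 1 -> lam3 tc < 1.
Proof.
case/andP=> tc_gt0 tc_lt1; rewrite /lam3 ltrBlDr ltrDl.
by rewrite !(mulr_gt0, invr_gt0) ?subr_gt0 //; lra.
Qed.

Lemma toy_gap_diagonal (R : realType) (t1 tc ts : R) :
  t1 + tc + ts = 1 -> 0 < ts -> ts <= tc -> 4 * tc <= 9 * ts -> tc < 1 / 1000 ->
  let m := lam3 tc - tc / 9 in let a := (t1 - ts) ^+ 2 + tc ^+ 2 in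
  1 <= m * (3 - 2 * tc) - a /\ tc / 6 <= m * (1 + 2 * tc) - a.
Proof.
move=> sum1 ts_gt0 ts_le_tc tc_le_ts tc_small m a.
(* To first order m (1 + 2 tc) - a = 4 ts - 13 tc / 9, positive exactly thanks to 4 tc <= 9 ts. *)
have t1E : t1 = 1 - tc - ts by lra.
subst t1.
have tc_ge0 : 0 <= tc by lra.
have ts_ge0 : 0 <= ts by lra.
have tc_le1 : tc <= 1 by lra.
have ts_le1 : ts <= 1 by lra.
have d0_gt0 : 0 < 3 - 2 * tc by lra.
have d2_gt0 : 0 < 1 + 2 * tc by lra.
have m_d0d2 : m * ((1 + 2 * tc) * (3 - 2 * tc)) =
    (1 - tc / 9) * (1 + 2 * tc) * (3 - 2 * tc) - 16 * tc * (1 - tc).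
  by rewrite /m /lam3; field; rewrite !gt_eqF.
have aE : a = (1 - tc - ts - ts) ^+ 2 + tc ^+ 2 by [].
clearbody m a.
have tc2_ge0 : 0 <= tc * tc := mulr_ge0 tc_ge0 tc_ge0.
have tcts_ge0 : 0 <= tc * ts := mulr_ge0 tc_ge0 ts_ge0.
have tc2 : tc * tc <= tc / 1000 by have := ler_wpM2l tc_ge0 (ltW tc_small); lra.
have tcts : tc * ts <= tc * tc := ler_wpM2l tc_ge0 ts_le_tc.
have ts2 : ts * ts <= tc * tc := ler_pM ts_ge0 ts_ge0 ts_le_tc ts_le_tc.
have tc3 : tc * tc * tc <= tc * tc := ler_piMr tc2_ge0 tc_le1.
have tc2ts : tc * tc * ts <= tc * tc := ler_piMr tc2_ge0 ts_le1.
have tcts2 : tc * ts * ts <= tc * tc := le_trans (ler_piMr tcts_ge0 ts_le1) tcts.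
have := mulr_ge0 tc2_ge0 tc_ge0; have := mulr_ge0 tc2_ge0 ts_ge0.
have := mulr_ge0 tcts_ge0 ts_ge0 => tcts2_ge0 tc2ts_ge0 tc3_ge0.
split.
- rewrite -(ler_pM2r d2_gt0) mul1r.
  have -> : (m * (3 - 2 * tc) - a) * (1 + 2 * tc) =
      m * ((1 + 2 * tc) * (3 - 2 * tc)) - a * (1 + 2 * tc) by ring.
  rewrite m_d0d2 aE; lra.
- rewrite -(ler_pM2r d0_gt0).
  have -> : (m * (1 + 2 * tc) - a) * (3 - 2 * tc) =
      m * ((1 + 2 * tc) * (3 - 2 * tc)) - a * (3 - 2 * tc) by ring.
  rewrite m_d0d2 aE; lra.
Qed.

Lemma toy_gap_conditions (R : realType) (t1 tc ts : R) :
  t1 + tc + ts = 1 -> 0 < ts -> ts <= tc -> 4 * tc <= 9 * ts -> tc < 1 / 1000 ->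
  let m := lam3 tc - tc / 9 in
  let a := (t1 - ts) ^+ 2 + tc ^+ 2 in let b := 2 * tc * (t1 - ts) in
  [/\ 0 < m * (3 - 2 * tc) - a,
      b ^+ 2 <= (m * (3 - 2 * tc) - a) * (m * (1 + 2 * tc) - a) & 0 <= m].
Proof.
move=> sum1 ts_gt0 ts_le_tc tc_le_ts tc_small m a b.
have [P_ge1 Q_ge] := toy_gap_diagonal sum1 ts_gt0 ts_le_tc tc_le_ts tc_small.
rewrite -/m -/a in P_ge1 Q_ge.
have tc_ge0 : 0 <= tc by lra.
have tc2 : tc ^+ 2 <= tc / 1000 by rewrite expr2; have := ler_wpM2l tc_ge0 (ltW tc_small); lra.
have b2 : b ^+ 2 <= 4 * tc ^+ 2.
  have t1ts : (t1 - ts) ^+ 2 <= 1 by rewrite -(expr1n _ 2) ler_sqr ?nnegrE; lra.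
  have -> : b ^+ 2 = 4 * tc ^+ 2 * (t1 - ts) ^+ 2 by rewrite /b; ring.
  by apply: ler_piMr; rewrite ?mulr_ge0 ?sqr_ge0.
have a_ge0 : 0 <= a by rewrite addr_ge0 ?sqr_ge0.
split.
- lra.
- have : m * (1 + 2 * tc) - a <= (m * (3 - 2 * tc) - a) * (m * (1 + 2 * tc) - a).
    by rewrite ler_peMl //; apply: le_trans Q_ge; apply: divr_ge0; lra.
  lra.
- have : 0 < m * (3 - 2 * tc) by lra.
  by rewrite pmulr_lgt0 ?ltW //; lra.
Qed.

Lemma lam3_near_lamhat (R : realType) (t1 tc ts : R) :
  t1 + tc + ts = 1 -> 0 < ts -> ts <= tc -> tc < 1 / 1000 ->
  `|lam3 tc - (1 - 16%:R / 3%:R * (tc / t1))| <= 100 * (tc / t1) ^+ 2.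
Proof.
move=> sum1 ts_gt0 ts_le_tc tc_small.
have t1_gt0 : 0 < t1 by lra.
have d0_gt0 : 0 < 3 - 2 * tc by lra.
have d2_gt0 : 0 < 1 + 2 * tc by lra.
set x := tc / t1.
have x_t1 : x * t1 = tc by rewrite /x divfK // gt_eqF.
have tc_ge0 : 0 <= tc by lra.
have x_ge0 : 0 <= x by rewrite /x divr_ge0 // ltW.
have tc_le_x : tc <= x by rewrite -x_t1 ler_piMr //; lra.
have x_tc : x - tc = x * (tc + ts).
  by rewrite -{1}x_t1 (_ : t1 = 1 - tc - ts); [ring | lra].
have err_eq : (16 * tc / 3 - (1 - lam3 tc)) * (3 * ((3 - 2 * tc) * (1 + 2 * tc))) =
    16 * tc ^+ 2 * (7 - 4 * tc).
  by rewrite /lam3; field; rewrite !gt_eqF.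
have den_gt0 : 0 < 3 * ((3 - 2 * tc) * (1 + 2 * tc)) by rewrite !mulr_gt0.
have err_ge0 : 0 <= 16 * tc / 3 - (1 - lam3 tc).
  by rewrite -(pmulr_lge0 _ den_gt0) err_eq !mulr_ge0 ?sqr_ge0 //; lra.
have err_le : 16 * tc / 3 - (1 - lam3 tc) <= 14 * tc ^+ 2.
  rewrite -(ler_pM2r den_gt0) err_eq.
  have : 8 <= 3 * ((3 - 2 * tc) * (1 + 2 * tc)) by nra.
  have := sqr_ge0 tc; nra.
have x_tc_le : x * (tc + ts) <= 2 * x ^+ 2.
  by rewrite expr2 mulrCA; apply: ler_wpM2l => //; lra.
have tc2_le : tc ^+ 2 <= x ^+ 2 by rewrite ler_sqr ?nnegrE.
have -> : lam3 tc - (1 - 16%:R / 3%:R * x) = 16%:R / 3%:R * (x - tc) + (16 * tc / 3 - (1 - lam3 tc)).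
  by field.
rewrite x_tc ger0_norm; last by have := mulr_ge0 x_ge0 (addr_ge0 tc_ge0 (ltW ts_gt0)); lra.
lra.
Qed.

Lemma top3_values (R : realDomainType) (l mu0 mu1 mu2 : R) : l < 1 ->
  mu1 <= mu0 -> mu2 <= mu1 ->
  mu0 = 1 \/ mu0 = l -> mu1 = 1 \/ mu1 = l -> mu2 = 1 \/ mu2 = l ->
  mu0 + mu1 + mu2 = 1 + 1 + l -> [/\ mu0 = 1, mu1 = 1 & mu2 = l].
Proof.
by move=> l_lt1 mu01 mu12 [] mu0E [] mu1E [] mu2E sum_mu; split; lra.
Qed.

Lemma toy_spectral_data (R : realType) (t1 tc ts : R) :
  0 < t1 -> t1 + tc + ts = 1 -> 0 < ts -> ts <= tc -> 4 * tc <= 9 * ts -> tc < 1 / 1000 ->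
  let W := normalized_eigvecs (degree t1 tc ts) (toy_eigvecs tc) (toy_kappa t1 tc) in
  let m := lam3 tc - tc / 9 in
  [/\ W^T *m W = 1%:M, normAdj t1 tc ts *m W = W *m diag_mx (\row_k toy_nu tc k),
      forall z : 'cV[R]_6,
        W^T *m z = 0 -> (z^T *m normAdj t1 tc ts *m z) 0 0 <= m * (z^T *m z) 0 0
    & forall k, m < toy_nu tc k].
Proof.
move=> t1_gt0 sum1 ts_gt0 ts_le_tc tc_le_ts tc_small W m.
have tc_ge0 : 0 <= tc by lra.
have tc_lt1 : tc < 1 by lra.
have d_gt0 i : 0 < degree t1 tc ts i.
  rewrite (degreeE sum1) /toy_degree.
  by case: ifP => _; [|case: ifP => _]; rewrite ?mulr_gt0 ?exprn_gt0; lra.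
have kappa_gt0 k : 0 < toy_kappa t1 tc k.
  rewrite /toy_kappa.
  by case: ifP => _; [|case: ifP => _]; rewrite ?mulr_gt0 ?exprn_gt0; lra.
have [P_gt0 PQ m_ge0] := toy_gap_conditions sum1 ts_gt0 ts_le_tc tc_le_ts tc_small.
have lam3_lt_1 : lam3 tc < 1 by apply: lam3_lt1; lra.
split.
- exact: normalized_eigvecs_orth d_gt0 kappa_gt0 (toy_gram sum1).
- exact: normalized_eigvecs_eigen (toy_kappa t1 tc) d_gt0 (toy_gen_eigen sum1 tc_ge0 tc_lt1).
- apply: (normalized_rayleigh d_gt0 kappa_gt0) => z.
  exact: (toy_rayleigh_gap sum1 tc_ge0 tc_lt1 t1_gt0 (m := m)).
- by move=> k; rewrite /m /toy_nu; case: ifP => _; lra.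
Qed.

Lemma toy_top_eigenspace (R : realType) (t1 tc ts : R) (V : 'M[R]_6) (mu : 'I_6 -> R) :
  0 < t1 -> t1 + tc + ts = 1 -> 0 < ts -> ts <= tc -> 4 * tc <= 9 * ts -> tc < 1 / 1000 ->
  V^T *m V = 1%:M -> normAdj t1 tc ts = V *m diag_mx (\row_i mu i) *m V^T ->
  (forall i j : 'I_6, (i <= j)%N -> mu j <= mu i) ->
  let W := normalized_eigvecs (degree t1 tc ts) (toy_eigvecs tc) (toy_kappa t1 tc) in
  (forall k : 'I_3, mu (widen_ord (isT : (3 <= 6)%N) k) = toy_nu tc k) /\
  (forall (j : 'I_6) (i : 'I_3), (3 <= j)%N -> (V^T *m W) j i = 0).
Proof.
move=> t1_gt0 sum1 ts_gt0 ts_le_tc tc_le_ts tc_small V_orth N_eig mu_anti W.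
have [W_orth N_W gap nu_gap] := toy_spectral_data t1_gt0 sum1 ts_gt0 ts_le_tc tc_le_ts tc_small.
split; last exact: top_coord_eq0 V_orth N_eig mu_anti W_orth N_W gap nu_gap.
have top_value (j : 'I_6) : (j < 3)%N -> mu j = 1 \/ mu j = lam3 tc.
  move=> /(top_eigenvalue V_orth N_eig mu_anti W_orth N_W gap nu_gap) [k ->].
  by rewrite /toy_nu; case: ifP => _; [right | left].
have top_sum := sum_top_eigenvalues V_orth N_eig mu_anti W_orth N_W gap nu_gap.
rewrite (big_ord_narrow (isT : (3 <= 6)%N)) !sum_ord3 /toy_nu /= in top_sum.
have lam3_lt_1 : lam3 tc < 1 by apply: lam3_lt1; lra.
have [mu0 mu1 mu2] : [/\ mu o0 = 1, mu o1 = 1 & mu o2 = lam3 tc].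
  apply: top3_values => //; try exact: top_value; try exact: mu_anti.
  by rewrite -top_sum; congr (mu _ + mu _ + mu _); apply: val_inj.
apply: ord3_ind; rewrite /toy_nu /=; [rewrite -mu0 | rewrite -mu1 | rewrite -mu2].
all: by congr mu; apply: val_inj.
Qed.

Theorem theorem6 (R : realType) :
  exists (C delta : R), 0 < delta /\
  forall t1 tc ts : R,
    0 < t1 -> 0 < ts / t1 -> ts / t1 < tc / t1 ->
    (4%:R / 9%:R) * tc <= ts -> ts <= tc ->
    t1 + tc + ts = 1 ->
    tc / t1 < delta ->
    forall (V : 'M[R]_6) (mu : 'I_6 -> R),
      V^T *m V = 1%:M ->
      normAdj t1 tc ts = V *m diag_mx (\row_i mu i) *m V^T ->
      (forall i j : 'I_6, (i <= j)%N -> mu j <= mu i) ->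
      (forall k : 'I_3,
         `|mu (widen_ord (isT : (3 <= 6)%N) k) - lamhat t1 tc ts k|
           <= C * (tc / t1) ^+ 2) /\
      sinF (first3 V) (colnormalize (Uhat R)) <= C * (tc / t1).
Proof.
exists 100, (1 / 1000); split; first lra.
move=> t1 tc ts t1_gt0 ts_pos ts_lt_tc ts_lower ts_le_tc sum1 tc_small V mu V_orth N_eig mu_anti.
have ts_gt0 : 0 < ts by have := mulr_gt0 ts_pos t1_gt0; rewrite divfK // gt_eqF.
have tc_le_ratio : tc <= tc / t1 by rewrite ler_pdivlMr //; apply: ler_piMr; lra.
have [mu_top top_coord] :=
  toy_top_eigenspace t1_gt0 sum1 ts_gt0 ts_le_tc (ltac:(lra)) (ltac:(lra)) V_orth N_eig mu_anti.
split=> [k|].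
  rewrite mu_top; move: k; apply: ord3_ind; rewrite /toy_nu /lamhat /=.
  - by rewrite subrr normr0 mulr_ge0 // sqr_ge0.
  - by rewrite subrr normr0 mulr_ge0 // sqr_ge0.
  - exact: lam3_near_lamhat sum1 ts_gt0 ts_le_tc (ltac:(lra)).
apply: le_trans (sinF_le_frob_sub _ (lcols_orth (isT : (3 <= 6)%N) V_orth)
                   (lcols_proj (isT : (3 <= 6)%N) V_orth top_coord)) _.
apply: le_trans (toy_eigvecs_near_Uhat sum1 (ltac:(lra)) (ltac:(lra)) t1_gt0) _.
lra.
Qed.
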